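(* Let $G$ be a convergence group. Then $\mathcal B := \{H^{\diamond} : H\subseteq\Gamma G \text{ equicontinuous}\}$ is a zero neighbourhood base of a group topology $\tau$ on $G$ with the following three properties. First, $\tau$ is locally quasi-convex. Second, the identity map from $G$ (with its convergence structure) to $(G,\tau)$ is continuous. Third, $\tau$ is finer than every locally quasi-convex group topology $\mu$ on $G$ for which the identity $G\to(G,\mu)$ is continuous. In other words, $\tau$ is the locally quasi-convex modification $\tau(G)$ of $G$.
   Context: All groups are abelian. A convergence group is an abelian group with a convergence structure (an assignment to each point $x$ of a collection of filters converging to $x$). This assignment must satisfy three conditions: point ultrafilters converge to their point; finite intersections of filters converging to $x$ converge to $x$; and finer filters converge. The group operation must be compatible: $\mathcal F\to x$, $\mathcal G\to y$ imply $\mathcal F-\mathcal G\to x-y$. Topological groups are convergence groups, with convergent filters being those finer than the neighbourhood filter. $\mathbb T=\mathbb R/\mathbb Z$, $\rho:\mathbb R\to\mathbb T$ is the quotient map, and $\mathbb T_+=\rho([-1/4,1/4])$. $\Gamma G$ is the group of continuous homomorphisms $G\to\mathbb T$. A set $M\subseteq\Gamma G$ is equicontinuous if for every filter $\mathcal F\to0$ in $G$, the filter generated by $\{\varphi(x):\varphi\in M,x\in F\}$, $F\in\mathcal F$, converges to $0$ in $\mathbb T$. For $A\subseteq G$ and $H\subseteq\Gamma G$, set $A^{\circ}=\{\varphi\in\Gamma G:\varphi(A)\subseteq\mathbb T_+\}$ and $H^{\diamond}=\{x\in G: \varphi(x)\in\mathbb T_+ \ \forall \varphi\in H\}$. A subset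 $A$ of a topological group $G$ is quasi-convex if for every $x\in G\setminus A$ there is a continuous character $\varphi$ with $\varphi(A)\subseteq\mathbb T_+$ and $\varphi(x)\notin\mathbb T_+$. A topological group is locally quasi-convex if it has a zero neighbourhood base of quasi-convex sets. The locally quasi-convex modification $\tau(G)$ of a convergence group $G$ is the finest locally quasi-convex group topology on $G$ that is coarser than the convergence structure of $G$. *)

From Stdlib Require Import Reals.
Open Scope R_scope.

Record abgroup := AbGroup {
  ag_car :> Type;
  ag0 : ag_car;
  agadd : ag_car -> ag_car -> ag_car;
  agopp : ag_car -> ag_car;
  ag_addA : forall x y z, agadd x (agadd y z) = agadd (agadd x y) z;
  ag_addC : forall x y, agadd x y = agadd y x;
  ag_add0 : forall x, agadd ag0 x = x;
  ag_addN : forall x, agadd (agopp x) x = ag0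
}.
Arguments ag0 {_}.
Arguments agadd {_}.
Arguments agopp {_}.
Definition agsub {G : abgroup} (x y : G) : G := agadd x (agopp y).

Definition T := { t : R | 0 <= t < 1 }.

Lemma frac_part_in (r : R) : 0 <= frac_part r < 1.
Proof. destruct (base_fp r) as [h1 h2]. split; [apply Rge_le; exact h1 | exact h2]. Qed.

Definition rho (r : R) : T := exist _ (frac_part r) (frac_part_in r).
Definition T0 : T := rho 0.
Definition Tadd (s t : T) : T := rho (proj1_sig s + proj1_sig t).

Definition Tplus (t : T) : Prop := exists r, -(1/4) <= r <= 1/4 /\ t = rho r.

Definition Tnear (t s : T) (eps : R) : Prop :=
  exists r, Rabs r < eps /\ s = Tadd t (rho r).

Definition is_filter {X : Type} (F : (X -> Prop) -> Prop) : Prop :=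
  F (fun _ => True) /\
  ~ F (fun _ => False) /\
  (forall A B, F A -> F B -> F (fun x => A x /\ B x)) /\
  (forall A B, F A -> (forall x, A x -> B x) -> F B).

Definition pt_filter {X : Type} (x : X) : (X -> Prop) -> Prop := fun A => A x.

Definition filter_cap {X : Type} (F H : (X -> Prop) -> Prop) : (X -> Prop) -> Prop :=
  fun A => F A /\ H A.

Definition filter_sub {G : abgroup} (F H : (G -> Prop) -> Prop) : (G -> Prop) -> Prop :=
  fun S => exists A B, F A /\ H B /\ forall a b, A a -> B b -> S (agsub a b).

(* conv x F : the filter F converges to x *)
Definition convergence (G : abgroup) := G -> ((G -> Prop) -> Prop) -> Prop.

Definition is_convergence_group (G : abgroup) (conv : convergence G) : Prop :=
  (forall x F, conv x F -> is_filter F) /\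
  (forall x, conv x (pt_filter x)) /\
  (forall x F H, conv x F -> conv x H -> conv x (filter_cap F H)) /\
  (forall x F H, conv x F -> is_filter H -> (forall A, F A -> H A) -> conv x H) /\
  (forall x y F H, conv x F -> conv y H -> conv (agsub x y) (filter_sub F H)).

Definition is_hom {G : abgroup} (phi : G -> T) : Prop :=
  forall x y, phi (agadd x y) = Tadd (phi x) (phi y).

Definition conv_char {G : abgroup} (conv : convergence G) (phi : G -> T) : Prop :=
  is_hom phi /\
  forall x F, conv x F -> forall eps, 0 < eps ->
    exists A, F A /\ forall a, A a -> Tnear (phi x) (phi a) eps.

Definition equicontinuous {G : abgroup} (conv : convergence G) (M : (G -> T) -> Prop) : Prop :=
  forall F, conv ag0 F -> forall eps, 0 < eps ->
    exists A, F A /\ forall phi a, M phi -> A a -> Tnear T0 (phi a) eps.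

Definition diamond {G : abgroup} (H : (G -> T) -> Prop) : G -> Prop :=
  fun x => forall phi, H phi -> Tplus (phi x).

Definition Bfamily {G : abgroup} (conv : convergence G) : (G -> Prop) -> Prop :=
  fun B => exists H : (G -> T) -> Prop,
    (forall phi, H phi -> conv_char conv phi) /\ equicontinuous conv H /\
    (forall x, B x <-> diamond H x).

Definition is_topology {X : Type} (tau : (X -> Prop) -> Prop) : Prop :=
  tau (fun _ => True) /\
  (forall S : (X -> Prop) -> Prop, (forall U, S U -> tau U) ->
     tau (fun x => exists U, S U /\ U x)) /\
  (forall U V, tau U -> tau V -> tau (fun x => U x /\ V x)).

Definition nbhd {X : Type} (tau : (X -> Prop) -> Prop) (x : X) (A : X -> Prop) : Prop :=
  exists U, tau U /\ U x /\ forall y, U y -> A y.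

Definition is_group_topology (G : abgroup) (tau : (G -> Prop) -> Prop) : Prop :=
  is_topology tau /\
  forall x y W, nbhd tau (agsub x y) W ->
    exists U V, nbhd tau x U /\ nbhd tau y V /\
      forall a b, U a -> V b -> W (agsub a b).

Definition top_char {G : abgroup} (tau : (G -> Prop) -> Prop) (phi : G -> T) : Prop :=
  is_hom phi /\
  forall x eps, 0 < eps ->
    exists U, nbhd tau x U /\ forall a, U a -> Tnear (phi x) (phi a) eps.

Definition quasi_convex {G : abgroup} (tau : (G -> Prop) -> Prop) (A : G -> Prop) : Prop :=
  forall x, ~ A x -> exists phi, top_char tau phi /\
    (forall a, A a -> Tplus (phi a)) /\ ~ Tplus (phi x).

Definition locally_quasi_convex {G : abgroup} (tau : (G -> Prop) -> Prop) : Prop :=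
  forall U, nbhd tau ag0 U ->
    exists A, nbhd tau ag0 A /\ quasi_convex tau A /\ forall x, A x -> U x.

Definition zero_nbhd_base {G : abgroup} (tau : (G -> Prop) -> Prop)
  (B : (G -> Prop) -> Prop) : Prop :=
  (forall A, B A -> nbhd tau ag0 A) /\
  (forall U, nbhd tau ag0 U -> exists A, B A /\ forall x, A x -> U x).

Definition id_continuous {G : abgroup} (conv : convergence G)
  (tau : (G -> Prop) -> Prop) : Prop :=
  forall x F, conv x F -> forall U, nbhd tau x U -> F U.

Definition finer {X : Type} (tau mu : (X -> Prop) -> Prop) : Prop :=
  forall U, mu U -> tau U.

From Stdlib Require Import Reals Lra Lia Classical ProofIrrelevance.
Open Scope R_scope.

(** The argument rests on one estimate on the circle [T = R/Z]: if
    [t, 2t, ..., 2^n t] all lie in [T_+ = rho([-1/4,1/4])], then [t] lies in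
    [rho([-1/(4 2^n), 1/(4 2^n)])].  It yields
    - a "half" of every member [H^diamond] of [B], namely [(H ∪ 2H)^diamond], so the
      translates [x + B] define a group topology [tau];
    - the [tau]-continuity of every continuous character [phi], via the polar of the
      equicontinuous set [{phi, ..., 2^n phi}]; hence each [H^diamond] is
      quasi-convex, and [tau] is locally quasi-convex;
    - the equicontinuity of the polar of a zero-neighbourhood of any group topology
      [mu] coarser than [G]; when [mu] is locally quasi-convex, its quasi-convex
      zero-neighbourhoods are prepolars of such polars, so they belong to [B]. *)

Lemma T_eq (s t : T) : proj1_sig s = proj1_sig t -> s = t.
Proof.
  destruct s as [x hx], t as [y hy]; simpl; intros ->; f_equal; apply proof_irrelevance.
Qed.

Lemma rho_eq_int (a b : R) (k : Z) : a - b = IZR k -> rho a = rho b.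
Proof.
  intros hk; apply T_eq; simpl; unfold frac_part, Int_part.
  assert (hup : up a = (up b + k)%Z).
  { destruct (archimed b) as [h1 h2]; symmetry; apply tech_up; rewrite plus_IZR; lra. }
  rewrite hup, !minus_IZR, plus_IZR; lra.
Qed.

Lemma rho_inj (a b : R) : rho a = rho b -> exists k, a - b = IZR k.
Proof.
  intros h; apply (f_equal (@proj1_sig _ _)) in h; simpl in h; unfold frac_part in h.
  exists (Int_part a - Int_part b)%Z; rewrite minus_IZR; lra.
Qed.

Lemma rho_surj (t : T) : exists r, t = rho r.
Proof.
  exists (proj1_sig t); destruct t as [x [h1 h2]]; apply T_eq; simpl.
  unfold frac_part, Int_part; rewrite <- (tech_up x 1); simpl; lra.
Qed.

Lemma Tadd_rho (a b : R) : Tadd (rho a) (rho b) = rho (a + b).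
Proof.
  apply rho_eq_int with (k := (- (Int_part a + Int_part b))%Z).
  simpl; unfold frac_part; rewrite opp_IZR, plus_IZR; ring.
Qed.

Lemma IZR_small (k : Z) : Rabs (IZR k) < 1 -> k = 0%Z.
Proof.
  intros h; apply Rabs_def2 in h; destruct h as [h1 h2].
  apply lt_IZR in h1; apply (lt_IZR (-1)) in h2; lia.
Qed.

Lemma Rabs_le_bounds (a b : R) : Rabs a <= b -> - b <= a <= b.
Proof. unfold Rabs; destruct (Rcase_abs a); intros; lra. Qed.

Lemma Tadd_T0_l (t : T) : Tadd T0 t = t.
Proof. destruct (rho_surj t) as [r ->]; unfold T0; rewrite Tadd_rho; f_equal; ring. Qed.

Definition Tdbl (t : T) : T := Tadd t t.

Fixpoint Tdbl_iter (k : nat) (t : T) : T :=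
  match k with O => t | S k => Tdbl_iter k (Tdbl t) end.

Lemma Tdbl_rho (a : R) : Tdbl (rho a) = rho (2 * a).
Proof. unfold Tdbl; rewrite Tadd_rho; f_equal; ring. Qed.

Lemma Tdbl_add (s t : T) : Tdbl (Tadd s t) = Tadd (Tdbl s) (Tdbl t).
Proof.
  destruct (rho_surj s) as [a ->], (rho_surj t) as [b ->].
  rewrite !Tadd_rho, !Tdbl_rho, Tadd_rho; f_equal; ring.
Qed.

Lemma Tdbl_T0 : Tdbl T0 = T0.
Proof. unfold T0; rewrite Tdbl_rho; f_equal; ring. Qed.

Lemma Tplus_small (r : R) : Rabs r <= / 4 -> Tplus (rho r).
Proof. intros h; exists r; split; [apply Rabs_le_bounds in h; lra | reflexivity]. Qed.

Lemma Tplus_T0 : Tplus T0.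
Proof. apply Tplus_small; rewrite Rabs_R0; lra. Qed.

Lemma inv_pow2_bounds (n : nat) : 0 < / 2 ^ n <= 1.
Proof.
  assert (h := pow_R1_Rle 2 n ltac:(lra)); split.
  - apply Rinv_0_lt_compat; lra.
  - rewrite <- Rinv_1; apply Rinv_le_contravar; lra.
Qed.

(** Inductively, [2t] has a lift [r'] of size at
    most [1/(4 2^n)] and [t] a lift [r0] in [[-1/4,1/4]]; then [2 r0 - r'] is an
    integer of absolute value [< 1], so [r0 = r'/2]. *)
Lemma Tplus_dbl_iter_small (n : nat) : forall t : T,
  (forall k, (k <= n)%nat -> Tplus (Tdbl_iter k t)) ->
  exists r, Rabs r <= / 4 / 2 ^ n /\ t = rho r.
Proof.
  induction n as [|n IH]; intros t h.
  - destruct (h O (le_n _)) as [r [hr e]]; exists r; split; [|exact e].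
    simpl; apply Rabs_le; lra.
  - destruct (IH (Tdbl t)) as [r' [hr' e']].
    { intros k hk; apply (h (S k)); lia. }
    assert (ht : Tplus t) by exact (h O ltac:(lia)).
    destruct ht as [r0 [hr0 ->]].
    rewrite Tdbl_rho in e'; destruct (rho_inj _ _ e') as [k hk].
    assert (hn := inv_pow2_bounds n).
    assert (k = 0%Z) as ->.
    { apply IZR_small; rewrite <- hk; apply Rabs_le_bounds in hr'.
      unfold Rdiv in hr'; apply Rabs_def1; nra. }
    exists r0; split; [|reflexivity].
    simpl in hk; replace r0 with (r' * / 2) by lra.
    rewrite Rabs_mult, (Rabs_right (/ 2)) by lra; simpl.
    unfold Rdiv in *; rewrite Rinv_mult; lra.
Qed.

Lemma dyadic_radius_small (eps : R) : 0 < eps -> exists n, / 4 / 2 ^ n < eps.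
Proof.
  intros he; destruct (pow_lt_1_zero (/ 2) ltac:(rewrite Rabs_right; lra) (4 * eps))
    as [N hN]; [lra|].
  exists N; specialize (hN N (le_n _)).
  rewrite pow_inv, Rabs_right in hN by (left; apply inv_pow2_bounds).
  unfold Rdiv; lra.
Qed.

Lemma Tnear0_rho (r eps : R) : Rabs r < eps -> Tnear T0 (rho r) eps.
Proof. intros h; exists r; split; [exact h | symmetry; apply Tadd_T0_l]. Qed.

Lemma Tnear0_inv (s : T) (eps : R) : Tnear T0 s eps -> exists r, Rabs r < eps /\ s = rho r.
Proof. intros [r [hr ->]]; exists r; split; [exact hr | apply Tadd_T0_l]. Qed.

Lemma Tnear_translate (t s : T) (eps : R) : Tnear T0 s eps -> Tnear t (Tadd t s) eps.
Proof. intros h; destruct (Tnear0_inv s eps h) as [r [hr ->]]; exists r; auto. Qed.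

Lemma Tnear_dbl (t s : T) (eps : R) : Tnear t s (eps / 2) -> Tnear (Tdbl t) (Tdbl s) eps.
Proof.
  intros [r [hr ->]]; exists (2 * r); split.
  - rewrite Rabs_mult, (Rabs_right 2) by lra; lra.
  - rewrite Tdbl_add, Tdbl_rho; reflexivity.
Qed.

Lemma Tplus_of_Tnear0 (s : T) : Tnear T0 s (/ 4) -> Tplus s.
Proof. intros h; destruct (Tnear0_inv s _ h) as [r [hr ->]]; apply Tplus_small; lra. Qed.

Lemma Tnear0_of_dbl_iter (n : nat) (t : T) (eps : R) : / 4 / 2 ^ n < eps ->
  (forall k, (k <= n)%nat -> Tplus (Tdbl_iter k t)) -> Tnear T0 t eps.
Proof.
  intros hn h; destruct (Tplus_dbl_iter_small n t h) as [r [hr ->]].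
  apply Tnear0_rho; lra.
Qed.

Section GroupAlgebra.
Variable G : abgroup.
Implicit Types a b x y : G.

Lemma addr0 x : agadd x ag0 = x.
Proof. rewrite ag_addC; apply ag_add0. Qed.

Lemma addrN x : agadd x (agopp x) = ag0.
Proof. rewrite ag_addC; apply ag_addN. Qed.

Lemma subrr x : agsub x x = ag0.
Proof. apply addrN. Qed.

Lemma opp_uniq x y : agadd x y = ag0 -> x = agopp y.
Proof. intros h; rewrite <- (addr0 x), <- (addrN y), ag_addA, h, ag_add0; reflexivity. Qed.

Lemma oppK x : agopp (agopp x) = x.
Proof. symmetry; apply opp_uniq, addrN. Qed.

Lemma oppD x y : agopp (agadd x y) = agadd (agopp x) (agopp y).
Proof.
  symmetry; apply opp_uniq.
  rewrite <- ag_addA, (ag_addA _ (agopp y)), (ag_addC _ (agopp y) x), <- ag_addA, ag_addN,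
    addr0, ag_addN; reflexivity.
Qed.

Lemma add_sub x a : agadd x (agsub a x) = a.
Proof. unfold agsub; rewrite (ag_addC _ a), ag_addA, addrN, ag_add0; reflexivity. Qed.

Lemma sub_add a b : agadd (agsub a b) b = a.
Proof. rewrite ag_addC; apply add_sub. Qed.

Lemma sub_opp a x : agsub a (agopp x) = agadd x a.
Proof. unfold agsub; rewrite oppK; apply ag_addC. Qed.

Lemma sub_addadd x y a b : agsub (agadd x a) (agadd y b) = agadd (agsub x y) (agsub a b).
Proof.
  unfold agsub; rewrite oppD, <- !ag_addA; f_equal.
  rewrite (ag_addC _ a), <- ag_addA; f_equal; apply ag_addC.
Qed.

End GroupAlgebra.

Arguments addr0 {G}. Arguments subrr {G}. Arguments add_sub {G}. Arguments sub_add {G}.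
Arguments sub_opp {G}. Arguments sub_addadd {G}.

Section Characters.
Context {G : abgroup}.
Implicit Types (a b x : G) (phi : G -> T).

Lemma hom0 phi : is_hom phi -> phi ag0 = T0.
Proof.
  intros h; assert (e := h ag0 ag0); rewrite ag_add0 in e.
  destruct (rho_surj (phi ag0)) as [l hl]; rewrite hl, Tadd_rho in e.
  destruct (rho_inj _ _ e) as [k hk].
  rewrite hl; apply rho_eq_int with (k := (- k)%Z); rewrite opp_IZR; lra.
Qed.

Lemma hom_sub phi a b r s : is_hom phi -> phi a = rho r -> phi b = rho s ->
  phi (agsub a b) = rho (r - s).
Proof.
  intros hh ha hb; assert (e := hh (agsub a b) b).
  rewrite sub_add, ha, hb in e.
  destruct (rho_surj (phi (agsub a b))) as [l hl]; rewrite hl, Tadd_rho in e.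
  destruct (rho_inj _ _ e) as [k hk].
  rewrite hl; apply rho_eq_int with (k := (- k)%Z); rewrite opp_IZR; lra.
Qed.

Definition dbl_char phi : G -> T := fun x => Tdbl (phi x).

Fixpoint dbl_iter_char (k : nat) phi : G -> T :=
  match k with O => phi | S k => dbl_iter_char k (dbl_char phi) end.

Lemma dbl_iter_char_eq k : forall phi x, dbl_iter_char k phi x = Tdbl_iter k (phi x).
Proof. induction k as [|k IH]; intros phi x; simpl; [reflexivity | apply IH]. Qed.

Lemma hom_dbl phi : is_hom phi -> is_hom (dbl_char phi).
Proof. intros hh x y; unfold dbl_char; rewrite hh, Tdbl_add; reflexivity. Qed.

Definition dbl_set (M : (G -> T) -> Prop) : (G -> T) -> Prop :=
  fun psi => exists phi, M phi /\ psi = dbl_char phi.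

Definition dbl_orbit phi (n : nat) : (G -> T) -> Prop :=
  fun psi => exists k, (k <= n)%nat /\ psi = dbl_iter_char k phi.

Fixpoint gdbl_iter (k : nat) (a : G) : G :=
  match k with O => a | S k => gdbl_iter k (agadd a a) end.

Lemma hom_gdbl_iter phi : is_hom phi -> forall k a, phi (gdbl_iter k a) = Tdbl_iter k (phi a).
Proof. intros hh k; induction k as [|k IH]; intros a; simpl; [|rewrite IH, hh]; reflexivity. Qed.

End Characters.

Section Equicontinuity.
Variables (G : abgroup) (conv : convergence G) (hG : is_convergence_group G conv).
Implicit Types (phi psi : G -> T) (M : (G -> T) -> Prop).

Lemma conv_filter x F : conv x F -> is_filter F.
Proof. exact (proj1 hG x F). Qed.

Lemma conv_char_dbl phi : conv_char conv phi -> conv_char conv (dbl_char phi).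
Proof.
  intros [hh hc]; split; [apply hom_dbl; exact hh|].
  intros x F hF eps he; destruct (hc x F hF (eps / 2)) as [A [hA k]]; [lra|].
  exists A; split; [exact hA|]; intros a ha; apply Tnear_dbl, k, ha.
Qed.

Lemma conv_char_dbl_iter k : forall phi, conv_char conv phi -> conv_char conv (dbl_iter_char k phi).
Proof. induction k as [|k IH]; intros phi h; [exact h | apply IH, conv_char_dbl, h]. Qed.

Lemma equi_sub M1 M2 : (forall psi, M2 psi -> M1 psi) ->
  equicontinuous conv M1 -> equicontinuous conv M2.
Proof.
  intros hs h F hF eps he; destruct (h F hF eps he) as [A [hA k]].
  exists A; split; [exact hA|]; intros psi a hpsi; apply k, hs, hpsi.
Qed.

Lemma equi_empty : equicontinuous conv (fun _ => False).
Proof.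
  intros F hF eps he; exists (fun _ => True); split; [apply (conv_filter _ _ hF)|].
  intros _ _ [].
Qed.

Lemma equi_single psi : conv_char conv psi -> equicontinuous conv (fun chi => chi = psi).
Proof.
  intros [hh hc] F hF eps he; destruct (hc ag0 F hF eps he) as [A [hA k]].
  exists A; split; [exact hA|]; intros chi a -> ha; rewrite <- (hom0 _ hh); apply k, ha.
Qed.

Lemma equi_union M1 M2 : equicontinuous conv M1 -> equicontinuous conv M2 ->
  equicontinuous conv (fun psi => M1 psi \/ M2 psi).
Proof.
  intros h1 h2 F hF eps he.
  destruct (h1 F hF eps he) as [A1 [hA1 k1]], (h2 F hF eps he) as [A2 [hA2 k2]].
  exists (fun x => A1 x /\ A2 x); split.
  - destruct (conv_filter _ _ hF) as [_ [_ [hcap _]]]; apply hcap; assumption.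
  - intros psi a [h | h] [a1 a2]; [apply k1 | apply k2]; assumption.
Qed.

Lemma equi_dbl M : equicontinuous conv M -> equicontinuous conv (dbl_set M).
Proof.
  intros h F hF eps he; destruct (h F hF (eps / 2)) as [A [hA k]]; [lra|].
  exists A; split; [exact hA|]; intros chi a [phi [hphi ->]] ha.
  rewrite <- Tdbl_T0; apply Tnear_dbl, k; assumption.
Qed.

Lemma equi_dbl_orbit phi n : conv_char conv phi -> equicontinuous conv (dbl_orbit phi n).
Proof.
  intros hc; induction n as [|n IH].
  - apply equi_sub with (fun chi => chi = phi); [|apply equi_single, hc].
    intros psi [k [hk ->]]; assert (k = O) as -> by lia; reflexivity.
  - apply equi_sub with (fun psi => dbl_orbit phi n psi \/ psi = dbl_iter_char (S n) phi).
    + intros psi [k [hk ->]]; destruct (Nat.le_succ_r k n) as [[h | ->] _]; [exact hk| |].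
      * left; exists k; auto.
      * right; reflexivity.
    + apply equi_union; [exact IH | apply equi_single, conv_char_dbl_iter, hc].
Qed.

End Equicontinuity.

Section PolarFamily.
Variables (G : abgroup) (conv : convergence G) (hG : is_convergence_group G conv).

(** [G = ∅^diamond] belongs to [B], every member of [B] contains [0], and [B] is
    closed under finite intersections since [(H1 ∪ H2)^diamond ⊆ H1^diamond ∩ H2^diamond]. *)
Lemma Bfamily_full : Bfamily conv (fun _ => True).
Proof.
  exists (fun _ => False); split; [intros _ []|]; split; [apply equi_empty, hG|].
  intros x; split; intros _; [intros _ [] | trivial].
Qed.

Lemma Bfamily_zero B : Bfamily conv B -> B ag0.
Proof.
  intros [H [hc [_ hB]]]; apply hB; intros phi hphi.
  rewrite (hom0 phi (proj1 (hc phi hphi))); apply Tplus_T0.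
Qed.

Lemma Bfamily_inter B1 B2 : Bfamily conv B1 -> Bfamily conv B2 ->
  exists B, Bfamily conv B /\ forall x, B x -> B1 x /\ B2 x.
Proof.
  intros [H1 [hc1 [he1 hB1]]] [H2 [hc2 [he2 hB2]]].
  exists (diamond (fun psi => H1 psi \/ H2 psi)); split.
  - exists (fun psi => H1 psi \/ H2 psi); split; [intros psi [h | h]; auto|].
    split; [apply equi_union; assumption | tauto].
  - intros x hx; split; [apply hB1 | apply hB2]; intros phi hphi; apply hx; auto.
Qed.

(** If [phi y] and [2 phi y] lie in [T_+], then [phi y] lies in [rho([-1/8,1/8])];
    so on [(H ∪ 2H)^diamond] every [phi ∈ H] takes values in [rho([-1/8,1/8])], whence
    sums and differences of two such points lie in [H^diamond]. *)
Lemma Bfamily_half B : Bfamily conv B ->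
  exists B', Bfamily conv B' /\
    forall a b, B' a -> B' b -> B (agsub a b) /\ B (agadd a b).
Proof.
  intros [H [hc [he hB]]].
  set (H' := fun psi => H psi \/ dbl_set H psi).
  exists (diamond H'); split.
  - exists H'; split; [|split; [apply equi_union, equi_dbl; assumption | tauto]].
    intros psi [h | [phi [hphi ->]]]; [auto | apply conv_char_dbl, hc, hphi].
  - assert (eighth : forall y phi, diamond H' y -> H phi ->
              exists r, Rabs r <= / 8 /\ phi y = rho r).
    { intros y phi hy hphi; destruct (Tplus_dbl_iter_small 1 (phi y)) as [r [hr e]].
      - intros [|[|k]] hk; simpl; [| |lia].
        + apply hy; left; exact hphi.
        + apply (hy (dbl_char phi)); right; exists phi; auto.
      - exists r; split; [simpl in hr; lra | exact e]. }
    intros a b ha hb; split; apply hB; intros phi hphi;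
      destruct (eighth a phi ha hphi) as [r [hr ea]], (eighth b phi hb hphi) as [s [hs eb]];
      assert (hh := proj1 (hc phi hphi)).
    + rewrite (hom_sub phi a b r s hh ea eb); apply Tplus_small.
      unfold Rminus; eapply Rle_trans; [apply Rabs_triang | rewrite Rabs_Ropp; lra].
    + rewrite hh, ea, eb, Tadd_rho; apply Tplus_small.
      eapply Rle_trans; [apply Rabs_triang | lra].
Qed.

End PolarFamily.

Definition tauG {G : abgroup} (conv : convergence G) : (G -> Prop) -> Prop :=
  fun U => forall x, U x -> exists B, Bfamily conv B /\ forall b, B b -> U (agadd x b).

Section TauTopology.
Variables (G : abgroup) (conv : convergence G) (hG : is_convergence_group G conv).

Lemma nbhd_tau x U : nbhd (tauG conv) x U <->
  exists B, Bfamily conv B /\ forall b, B b -> U (agadd x b).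
Proof.
  split.
  - intros [V [hV [hx hVU]]]; destruct (hV x hx) as [B [hB k]].
    exists B; split; [exact hB|]; intros b hb; apply hVU, k, hb.
  - intros [B [hB k]].
    exists (fun y => exists B', Bfamily conv B' /\ forall b, B' b -> U (agadd y b)).
    split; [|split].
    + intros y [B' [hB' k']]; destruct (Bfamily_half _ _ hG B' hB') as [B'' [hB'' k'']].
      exists B''; split; [exact hB''|]; intros b hb; exists B''; split; [exact hB''|].
      intros b' hb'; rewrite <- ag_addA; apply k', (k'' b b' hb hb').
    + exists B; auto.
    + intros y [B' [hB' k']]; rewrite <- (addr0 y); apply k', (Bfamily_zero _ _ B' hB').
Qed.

Lemma tau_topology : is_topology (tauG conv).
Proof.
  split; [|split].
  - intros x _; exists (fun _ => True); split; [apply Bfamily_full, hG | auto].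
  - intros S hS x [U [hU hx]]; destruct (hS U hU x hx) as [B [hB k]].
    exists B; split; [exact hB|]; intros b hb; exists U; auto.
  - intros U V hU hV x [hx1 hx2].
    destruct (hU x hx1) as [B1 [h1 k1]], (hV x hx2) as [B2 [h2 k2]].
    destruct (Bfamily_inter _ _ hG B1 B2 h1 h2) as [B [hB k]].
    exists B; split; [exact hB|]; intros b hb; destruct (k b hb); auto.
Qed.

(** Subtraction is continuous: [(x + B') - (y + B') ⊆ (x - y) + B] for a half [B'] of [B]. *)
Lemma tau_group_topology : is_group_topology G (tauG conv).
Proof.
  split; [exact tau_topology|].
  intros x y W hW; apply nbhd_tau in hW; destruct hW as [B [hB k]].
  destruct (Bfamily_half _ _ hG B hB) as [B' [hB' k']].
  exists (fun a => exists b, B' b /\ a = agadd x b), (fun a => exists b, B' b /\ a = agadd y b).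
  split; [|split].
  - apply nbhd_tau; exists B'; split; [exact hB'|]; intros b hb; exists b; auto.
  - apply nbhd_tau; exists B'; split; [exact hB'|]; intros b hb; exists b; auto.
  - intros a b [b1 [h1 ->]] [b2 [h2 ->]]; rewrite sub_addadd; apply k, (k' b1 b2 h1 h2).
Qed.

Lemma tau_base : zero_nbhd_base (tauG conv) (Bfamily conv).
Proof.
  split.
  - intros A hA; apply nbhd_tau; exists A; split; [exact hA|].
    intros b hb; rewrite ag_add0; exact hb.
  - intros U hU; apply nbhd_tau in hU; destruct hU as [B [hB k]].
    exists B; split; [exact hB|]; intros x hx; rewrite <- (ag_add0 _ x); apply k, hx.
Qed.

(** Every continuous character of [G] is [tau]-continuous: near [x] use the polar of
    the equicontinuous set [{phi, 2 phi, ..., 2^n phi}]. *)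
Lemma conv_char_top_char phi : conv_char conv phi -> top_char (tauG conv) phi.
Proof.
  intros hc; split; [exact (proj1 hc)|].
  intros x eps he; destruct (dyadic_radius_small eps he) as [n hn].
  exists (fun a => exists b, diamond (dbl_orbit phi n) b /\ a = agadd x b); split.
  - apply nbhd_tau; exists (diamond (dbl_orbit phi n)); split.
    + exists (dbl_orbit phi n); split; [|split; [apply equi_dbl_orbit; assumption | tauto]].
      intros psi [k [_ ->]]; apply conv_char_dbl_iter, hc.
    + intros b hb; exists b; auto.
  - intros a [b [hb ->]]; rewrite (proj1 hc); apply Tnear_translate.
    apply (Tnear0_of_dbl_iter n); [exact hn|].
    intros k hk; rewrite <- dbl_iter_char_eq; apply hb; exists k; auto.
Qed.

(** Each member [H^diamond] of [B] is quasi-convex: a point outside it is separated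
    by some [phi ∈ H], which is [tau]-continuous. *)
Lemma tau_locally_quasi_convex : locally_quasi_convex (tauG conv).
Proof.
  intros U hU; destruct (proj2 tau_base U hU) as [B [hB k]].
  exists B; split; [apply (proj1 tau_base), hB | split; [|exact k]].
  intros x hx; destruct hB as [H [hc [_ hBH]]].
  assert (hn : ~ diamond H x) by (intros hd; apply hx, hBH, hd).
  apply not_all_ex_not in hn; destruct hn as [phi hphi]; apply imply_to_and in hphi.
  destruct hphi as [hphi hx'].
  exists phi; split; [apply conv_char_top_char, hc, hphi | split; [|exact hx']].
  intros a ha; apply hBH in ha; apply ha, hphi.
Qed.

(** If [F -> x], then [F - x -> 0], so by equicontinuity of [H] some [A ∈ F] satisfies
    [phi(a - x) ∈ T_+] for all [phi ∈ H], [a ∈ A]; that is [A ⊆ x + H^diamond]. *)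
Lemma tau_id_continuous : id_continuous conv (tauG conv).
Proof.
  intros x F hF U hU; apply nbhd_tau in hU; destruct hU as [B [hB k]].
  destruct hB as [H [_ [he hBH]]].
  destruct hG as [hfil [hpt [_ [_ hsub]]]].
  assert (h0 : conv ag0 (filter_sub F (pt_filter x))).
  { rewrite <- (subrr x); apply hsub; [exact hF | apply hpt]. }
  destruct (he _ h0 (/ 4)) as [A [[A1 [B1 [hA1 [hB1 kAB]]]] kA]]; [lra|].
  destruct (hfil x F hF) as [_ [_ [_ hup]]]; apply (hup A1); [exact hA1|].
  intros a ha; rewrite <- (add_sub x a); apply k, hBH; intros phi hphi.
  apply Tplus_of_Tnear0, kA; [exact hphi | apply kAB; assumption].
Qed.

End TauTopology.

Section GroupTopology.
Variables (G : abgroup) (mu : (G -> Prop) -> Prop) (hmu : is_group_topology G mu).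

Lemma nbhd_mono x (U V : G -> Prop) : nbhd mu x U -> (forall y, U y -> V y) -> nbhd mu x V.
Proof. intros [W [h1 [h2 h3]]] h; exists W; auto. Qed.

Lemma nbhd_mem x (U : G -> Prop) : nbhd mu x U -> U x.
Proof. intros [W [_ [h2 h3]]]; auto. Qed.

Lemma nbhd_inter x (U V : G -> Prop) :
  nbhd mu x U -> nbhd mu x V -> nbhd mu x (fun y => U y /\ V y).
Proof.
  intros [W1 [h1 [h2 h3]]] [W2 [k1 [k2 k3]]].
  exists (fun y => W1 y /\ W2 y); split; [apply (proj2 (proj2 (proj1 hmu))); assumption|].
  split; [auto|]; intros y [a b]; auto.
Qed.

(** Translation: [U ∈ N(x)] implies [U - x ∈ N(0)], via continuity of [(a,b) |-> a - b]
    at [(0, -x)]. *)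
Lemma nbhd_translate x U : nbhd mu x U -> nbhd mu ag0 (fun a => U (agadd x a)).
Proof.
  intros h; assert (h' : nbhd mu (agsub ag0 (agopp x)) U) by (rewrite sub_opp, addr0; exact h).
  destruct (proj2 hmu _ _ _ h') as [U' [V' [h1 [h2 k]]]].
  apply nbhd_mono with U'; [exact h1|]; intros a ha.
  rewrite <- (sub_opp a x); apply k; [exact ha | apply nbhd_mem, h2].
Qed.

(** Doubling is continuous at [0]: using [a + a = a - (0 - a)]. *)
Lemma nbhd_dbl W : nbhd mu ag0 W -> exists N, nbhd mu ag0 N /\ forall a, N a -> W (agadd a a).
Proof.
  intros h; assert (hsub : forall V, nbhd mu ag0 V -> nbhd mu (agsub ag0 ag0) V)
    by (intros V hV; rewrite subrr; exact hV).
  destruct (proj2 hmu _ _ _ (hsub W h)) as [U1 [V1 [h1 [h2 k1]]]].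
  destruct (proj2 hmu _ _ _ (hsub V1 h2)) as [U2 [V2 [g1 [g2 k2]]]].
  exists (fun a => U1 a /\ (U2 a /\ V2 a)); split; [apply nbhd_inter, nbhd_inter; assumption|].
  intros a [a1 [a2 a3]].
  replace (agadd a a) with (agsub a (agsub ag0 a))
    by (unfold agsub at 2; rewrite ag_add0; apply sub_opp).
  apply k1; [exact a1 | apply k2; [apply nbhd_mem, g1 | exact a3]].
Qed.

Lemma nbhd_gdbl_iter n A : nbhd mu ag0 A ->
  exists W, nbhd mu ag0 W /\ forall a, W a -> forall k, (k <= n)%nat -> A (gdbl_iter k a).
Proof.
  intros hA; induction n as [|n IH].
  - exists A; split; [exact hA|]; intros a ha k hk; assert (k = O) as -> by lia; exact ha.
  - destruct IH as [W [hW kW]]; destruct (nbhd_dbl W hW) as [N [hN kN]].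
    exists (fun a => A a /\ N a); split; [apply nbhd_inter; assumption|].
    intros a [a1 a2] [|k] hk; [exact a1 | apply (kW (agadd a a)); [apply kN, a2 | lia]].
Qed.

End GroupTopology.

Section Maximality.
Variables (G : abgroup) (conv : convergence G) (mu : (G -> Prop) -> Prop).
Hypotheses (hmu : is_group_topology G mu) (hid : id_continuous conv mu).

Lemma top_char_conv_char phi : top_char mu phi -> conv_char conv phi.
Proof.
  intros [hh hc]; split; [exact hh|]; intros y F hF eps he.
  destruct (hc y eps he) as [V [hV k]]; exists V; split; [apply (hid y F hF V hV) | exact k].
Qed.

Definition mu_polar (A : G -> Prop) : (G -> T) -> Prop :=
  fun phi => top_char mu phi /\ forall a, A a -> Tplus (phi a).

(** The polar of a [mu]-neighbourhood [A] of [0] is equicontinuous: if [2^k W ⊆ A]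
    for [k <= n], then [phi(W)] is uniformly [1/(4 2^n)]-close to [0], and [W ∈ F]
    whenever [F -> 0]. *)
Lemma equi_mu_polar A : nbhd mu ag0 A -> equicontinuous conv (mu_polar A).
Proof.
  intros hA F hF eps he; destruct (dyadic_radius_small eps he) as [n hn].
  destruct (nbhd_gdbl_iter G mu hmu n A hA) as [W [hW kW]].
  exists W; split; [apply (hid _ _ hF), hW|].
  intros phi a [[hh _] hphiA] ha; apply (Tnear0_of_dbl_iter n); [exact hn|].
  intros k hk; rewrite <- (hom_gdbl_iter phi hh); apply hphiA, kW; assumption.
Qed.

Lemma quasi_convex_bipolar A : quasi_convex mu A -> forall x, A x <-> diamond (mu_polar A) x.
Proof.
  intros hq x; split.
  - intros hx phi [_ h]; apply h, hx.
  - intros hx; apply NNPP; intros hn; destruct (hq x hn) as [phi [h1 [h2 h3]]].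
    apply h3, hx; split; assumption.
Qed.

(** Hence every [mu]-open set is [tau]-open: around each of its points it contains a
    translate of a quasi-convex [mu]-neighbourhood [A = (A°)^diamond ∈ B]. *)
Lemma tau_finer : locally_quasi_convex mu -> finer (tauG conv) mu.
Proof.
  intros hlqc U hU x hx.
  assert (hx0 : nbhd mu ag0 (fun a => U (agadd x a))).
  { apply nbhd_translate; [exact hmu|]; exists U; auto. }
  destruct (hlqc _ hx0) as [A [hA [hq hAU]]].
  exists A; split; [|exact hAU].
  exists (mu_polar A); split; [intros phi hphi; apply top_char_conv_char, (proj1 hphi)|].
  split; [apply equi_mu_polar, hA | apply quasi_convex_bipolar, hq].
Qed.

End Maximality.

Theorem theorem2p10 (G : abgroup) (conv : convergence G)
  (hG : is_convergence_group G conv) :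
  exists tau : (G -> Prop) -> Prop,
    is_group_topology G tau /\
    zero_nbhd_base tau (Bfamily conv) /\
    locally_quasi_convex tau /\
    id_continuous conv tau /\
    (forall mu : (G -> Prop) -> Prop,
       is_group_topology G mu -> locally_quasi_convex mu ->
       id_continuous conv mu -> finer tau mu).
Proof.
  exists (tauG conv).
  split; [apply tau_group_topology, hG|].
  split; [apply tau_base, hG|].
  split; [apply tau_locally_quasi_convex, hG|].
  split; [apply tau_id_continuous, hG|].
  intros mu hmu hlqc hid; apply tau_finer; assumption.
Qed.
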